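(* Let $p>1$, $\beta=1/(p-1)$, $\gamma=\frac{p-2}{2(p-1)}$, and let $\phi$ be a global solution on $[0,\infty)$ of $\phi''=\tfrac12 y\phi'-\gamma\phi-|\phi'|^p$, $\phi(0)=0$, $\phi'(0)=\alpha>0$, with $\phi,\phi'>0$ on $(0,\infty)$ and such that, for some $\bar R>0$, $\phi''<0$ on $[0,\bar R)$ and $\phi''>0$ on $(\bar R,\infty)$. Let $y_0>0$ be such that $\phi,\phi',\phi''>0$ on $[y_0,\infty)$. Then: (i) there exists $C>0$ such that $\phi'(y)\le Cy^\beta$ for all $y\ge y_0$; (ii) the function $Z(y)=y^{-1}(\phi'(y))^{p-1}$ satisfies $\liminf_{y\to\infty}Z(y)\ge\frac12\min(1,\beta)$; in particular there exists $C_1>0$ such that $\phi'(y)\ge C_1y^\beta$ for all $y\ge1$. *)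

From Stdlib Require Import Reals.
From Coquelicot Require Import Coquelicot.
Open Scope R_scope.

Definition beta (p : R) : R := 1 / (p - 1).
Definition gamma (p : R) : R := (p - 2) / (2 * (p - 1)).

(* |x|^p for real p > 0, with the convention 0^p = 0
   (Stdlib's Rpower is only meaningful for positive bases). *)
Definition absp (x p : R) : R :=
  if Req_EM_T x 0 then 0 else Rpower (Rabs x) p.

Definition Zf (p : R) (dphi : R -> R) (y : R) : R :=
  / y * Rpower (dphi y) (p - 1).

(* For large y the equation makes phi' grow: phi'' > 0 together with
   phi <= (K + y) phi' turns the ODE into (phi')^(p-1) <= A y, which is (i).
   For (ii), Z = (phi')^(p-1) / y satisfies
     Z'/Z = (p-1) phi''/phi' - 1/y  with  phi''/phi' >= y (m - Z) - D,
   m = min(1, beta)/2, so below any level m - eps the function Z grows at least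
   like its own size; hence Z eventually crosses that level and can never fall
   back under it. *)

From Stdlib Require Import Reals Lra Classical.
From Coquelicot Require Import Coquelicot.
Open Scope R_scope.

Lemma MVT_is_derive (f df : R -> R) a b : a < b ->
  (forall c, a <= c <= b -> is_derive f c (df c)) ->
  exists c, a < c < b /\ f b - f a = df c * (b - a).
Proof.
  intros Hab Hd.
  destruct (MVT_cor2 f df a b Hab) as (c & Hfc & Hc).
  - intros c Hc. apply is_derive_Reals, Hd, Hc.
  - exists c. split; assumption.
Qed.

Lemma is_derive_increment_ge (f df : R -> R) k a b : a <= b ->
  (forall c, a <= c <= b -> is_derive f c (df c)) ->
  (forall c, a < c < b -> k <= df c) -> k * (b - a) <= f b - f a.
Proof.
  intros Hab Hd Hk. destruct (Req_dec a b) as [<- | Hne]; [lra |].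
  destruct (MVT_is_derive f df a b) as (c & Hc & ->); [lra | exact Hd |].
  specialize (Hk c Hc). nra.
Qed.

Lemma is_derive_increment_le (f df : R -> R) k a b : a <= b ->
  (forall c, a <= c <= b -> is_derive f c (df c)) ->
  (forall c, a < c < b -> df c <= k) -> f b - f a <= k * (b - a).
Proof.
  intros Hab Hd Hk. destruct (Req_dec a b) as [<- | Hne]; [lra |].
  destruct (MVT_is_derive f df a b) as (c & Hc & ->); [lra | exact Hd |].
  specialize (Hk c Hc). nra.
Qed.

Lemma is_derive_continuity_pt (f : R -> R) x l : is_derive f x l -> continuity_pt f x.
Proof.
  intros Hd. apply continuity_pt_filterlim, (ex_derive_continuous f x), (ex_intro _ l Hd).
Qed.

Lemma is_derive_locally_lt (f : R -> R) c l T : is_derive f c l -> f c < T ->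
  exists d : posreal, forall x, Rabs (x - c) < d -> f x < T.
Proof.
  intros Hd HT.
  destruct (ex_derive_continuous f c (ex_intro _ l Hd) _ (open_lt T (f c) HT))
    as [d Hball].
  exists d. exact Hball.
Qed.

Lemma Rpower_gt_0 x y : 0 < Rpower x y.
Proof. apply exp_pos. Qed.

Lemma Rpower_plus_1 x q : 0 < x -> Rpower x (q + 1) = Rpower x q * x.
Proof. intros Hx. rewrite Rpower_plus, Rpower_1 by exact Hx. reflexivity. Qed.

Lemma absp_pos p x : 0 < x -> absp x p = x * Rpower x (p - 1).
Proof.
  intros Hx. unfold absp.
  destruct (Req_EM_T x 0) as [E | _]; [lra |].
  rewrite Rabs_pos_eq by lra.
  replace p with (p - 1 + 1) at 1 by ring.
  rewrite Rpower_plus_1 by exact Hx. ring.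
Qed.

Lemma beta_pos p : 1 < p -> 0 < beta p.
Proof. intros Hp. unfold beta. apply Rdiv_lt_0_compat; lra. Qed.

Lemma gamma_beta p : 1 < p -> gamma p = / 2 - beta p / 2.
Proof. intros Hp. unfold gamma, beta. field. lra. Qed.

Lemma Rpower_pred_beta p x : 1 < p -> 0 < x -> Rpower (Rpower x (p - 1)) (beta p) = x.
Proof.
  intros Hp Hx. rewrite Rpower_mult. unfold beta.
  replace ((p - 1) * (1 / (p - 1))) with 1 by (field; lra).
  apply Rpower_1, Hx.
Qed.

Lemma le_Rpower_beta p x z : 1 < p -> 0 < x ->
  Rpower x (p - 1) <= z -> x <= Rpower z (beta p).
Proof.
  intros Hp Hx Hxz. rewrite <- (Rpower_pred_beta p x Hp Hx) at 1.
  apply Rle_Rpower_l; [left; apply beta_pos, Hp |].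
  split; [apply Rpower_gt_0 | exact Hxz].
Qed.

Lemma Rpower_beta_le p x z : 1 < p -> 0 < x -> 0 < z ->
  z <= Rpower x (p - 1) -> Rpower z (beta p) <= x.
Proof.
  intros Hp Hx Hz Hzx. rewrite <- (Rpower_pred_beta p x Hp Hx).
  apply Rle_Rpower_l; [left; apply beta_pos, Hp | lra].
Qed.

Lemma is_derive_Zf p (w : R -> R) y dw : 0 < y -> 0 < w y -> is_derive w y dw ->
  is_derive (Zf p w) y (Zf p w y * ((p - 1) * (dw / w y) - / y)).
Proof.
  intros Hy Hw Hd. unfold Zf.
  assert (Hinv : is_derive (fun t : R => / t) y (- 1 / y ^ 2)).
  { apply (is_derive_inv (fun t => t)); [apply (is_derive_id y) | lra]. }
  assert (Hpow : is_derive (fun t => Rpower (w t) (p - 1)) y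
                   (dw * ((p - 1) * Rpower (w y) (p - 1 - 1)))).
  { apply (is_derive_comp (fun x => Rpower x (p - 1)) w y); [| exact Hd].
    apply is_derive_Reals, derivable_pt_lim_power, Hw. }
  replace (/ y * Rpower (w y) (p - 1) * ((p - 1) * (dw / w y) - / y))
    with (- 1 / y ^ 2 * Rpower (w y) (p - 1)
          + / y * (dw * ((p - 1) * Rpower (w y) (p - 1 - 1)))).
  - exact (is_derive_mult _ _ y _ _ Hinv Hpow Rmult_comm).
  - assert (E : Rpower (w y) (p - 1) = Rpower (w y) (p - 1 - 1) * w y).
    { rewrite <- Rpower_plus_1 by exact Hw. f_equal. ring. }
    rewrite E. field. lra.
Qed.

(* The two cases beta >= 1 and beta < 1 are where min(1, beta) comes from. *)
Lemma half_sub_gamma_mul_ge p K y q : 1 < p -> 0 <= K -> 0 <= q <= K + y ->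
  y * (/ 2 * Rmin 1 (beta p)) - Rabs (gamma p) * K <= / 2 * y - gamma p * q.
Proof.
  intros Hp HK Hq. rewrite (gamma_beta p Hp).
  destruct (Rle_lt_dec 1 (beta p)) as [Hb | Hb].
  - rewrite Rmin_left, Rabs_left1 by lra. nra.
  - rewrite Rmin_right, Rabs_pos_eq by lra. nra.
Qed.

Section Barrier.

Variables (Z Zd : R -> R) (y1 T : R).
Hypothesis T_pos : 0 < T.
Hypothesis Z_deriv : forall y, y1 <= y -> is_derive Z y (Zd y).
Hypothesis Z_pos : forall y, y1 <= y -> 0 < Z y.
Hypothesis Z_grows_below : forall y, y1 <= y -> Z y <= T -> Z y <= Zd y.

Lemma barrier_crossed : exists y2, y1 <= y2 /\ T < Z y2.
Proof.
  apply NNPP. intros Hnot.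
  assert (Hbelow : forall y, y1 <= y -> Z y <= T).
  { intros y Hy. apply Rnot_lt_le. intros HT. apply Hnot. exists y. split; assumption. }
  assert (Hmono : forall y, y1 <= y -> Z y1 <= Z y).
  { intros y Hy.
    enough (0 * (y - y1) <= Z y - Z y1) by lra.
    apply (is_derive_increment_ge Z Zd); [lra | intros c Hc; apply Z_deriv; lra |].
    intros c Hc. specialize (Z_pos c ltac:(lra)).
    specialize (Z_grows_below c ltac:(lra) (Hbelow c ltac:(lra))). lra. }
  pose proof (Z_pos y1 (Rle_refl y1)) as HZ1.
  assert (0 < T / Z y1) by (apply Rdiv_lt_0_compat; assumption).
  set (y := y1 + T / Z y1 + 1).
  assert (Hlin : Z y1 * (y - y1) <= Z y - Z y1).
  { apply (is_derive_increment_ge Z Zd); [unfold y; lra | intros c Hc; apply Z_deriv; lra |].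
    intros c Hc. specialize (Z_grows_below c ltac:(lra) (Hbelow c ltac:(lra))).
    specialize (Hmono c ltac:(lra)). lra. }
  assert (Hstep : Z y1 * (y - y1) = T + Z y1) by (unfold y; field; lra).
  specialize (Hbelow y ltac:(unfold y; lra)). lra.
Qed.

(* At a minimum point c of Z on [y2, y] below level T, continuity keeps Z < T
   just left of c, where Z is then increasing: c cannot be a minimum. *)
Lemma barrier_stays y2 : y1 <= y2 -> T < Z y2 -> forall y, y2 <= y -> T <= Z y.
Proof.
  intros Hy2 HT2 y Hy. apply Rnot_lt_le. intros HTy.
  destruct (continuity_ab_min Z y2 y) as (c & Hmin & Hc); [exact Hy |
    intros c Hc; apply (is_derive_continuity_pt Z c (Zd c)), Z_deriv; lra |].
  assert (HZc : Z c < T) by (specialize (Hmin y ltac:(lra)); lra).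
  assert (Hc2 : y2 < c) by (destruct (Req_dec y2 c) as [<- |]; lra).
  destruct (is_derive_locally_lt Z c (Zd c) T (Z_deriv c ltac:(lra)) HZc) as [d Hd].
  pose proof (cond_pos d) as Hdpos.
  set (x := Rmax y2 (c - d / 2)).
  assert (Hx : y2 <= x /\ c - d / 2 <= x /\ x < c).
  { unfold x. split; [apply Rmax_l | split; [apply Rmax_r | apply Rmax_lub_lt; lra]]. }
  assert (Hincr : 0 * (c - x) < Z c - Z x).
  { destruct (MVT_is_derive Z Zd x c) as (xi & Hxi & ->); [lra | intros t Ht; apply Z_deriv; lra |].
    assert (HZxi : Z xi < T) by (apply Hd; rewrite Rabs_left1; lra).
    specialize (Z_pos xi ltac:(lra)).
    specialize (Z_grows_below xi ltac:(lra) ltac:(lra)). nra. }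
  specialize (Hmin x ltac:(lra)). lra.
Qed.

Lemma eventually_above_barrier : exists Y, forall y, Y <= y -> T <= Z y.
Proof.
  destruct barrier_crossed as (y2 & Hy2 & HT2).
  exists y2. exact (barrier_stays y2 Hy2 HT2).
Qed.

End Barrier.

Lemma Rpower_lower_bound_extend (g : R -> R) a b c Y : 0 < a -> 0 <= b -> 0 < c ->
  (forall y, a <= y -> continuity_pt g y) -> (forall y, a <= y -> 0 < g y) ->
  (forall y, Y <= y -> c * Rpower y b <= g y) ->
  exists C1, 0 < C1 /\ forall y, a <= y -> C1 * Rpower y b <= g y.
Proof.
  intros Ha Hb Hc Hcont Hpos Htail.
  set (Y' := Rmax Y a).
  assert (HY' : Y <= Y' /\ a <= Y') by (split; [apply Rmax_l | apply Rmax_r]).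
  destruct (continuity_ab_min g a Y') as (x & Hmin & Hx);
    [lra | intros t Ht; apply Hcont; lra |].
  pose proof (Hpos x ltac:(lra)) as Hgx.
  pose proof (Rpower_gt_0 Y' b) as HPY.
  exists (Rmin c (g x / Rpower Y' b)). split.
  { apply Rmin_glb_lt; [exact Hc | apply Rdiv_lt_0_compat; assumption]. }
  intros y Hy. pose proof (Rpower_gt_0 y b) as HPy.
  destruct (Rle_lt_dec Y' y) as [HyY | HyY].
  - apply Rle_trans with (c * Rpower y b); [| apply Htail; lra].
    apply Rmult_le_compat_r; [lra | apply Rmin_l].
  - assert (Hpow : Rpower y b <= Rpower Y' b) by (apply Rle_Rpower_l; lra).
    apply Rle_trans with (g x / Rpower Y' b * Rpower Y' b).
    + apply Rmult_le_compat; [apply Rmin_glb; [lra | left; apply Rdiv_lt_0_compat; lra]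
                             | lra | apply Rmin_r | exact Hpow].
    + replace (g x / Rpower Y' b * Rpower Y' b) with (g x) by (field; lra).
      apply Hmin. lra.
Qed.

Section Tail.

Variables (p y0 : R) (phi dphi ddphi : R -> R).
Hypothesis p_gt_1 : 1 < p.
Hypothesis y0_pos : 0 < y0.
Hypothesis phi_deriv : forall y, 0 < y -> is_derive phi y (dphi y).
Hypothesis dphi_deriv : forall y, 0 < y -> is_derive dphi y (ddphi y).
Hypothesis ode : forall y, 0 < y ->
  ddphi y = / 2 * y * dphi y - gamma p * phi y - absp (dphi y) p.
Hypothesis phi_dphi_pos : forall y, 0 < y -> 0 < phi y /\ 0 < dphi y.
Hypothesis ddphi_pos : forall y, y0 <= y -> 0 < ddphi y.

Let K := phi y0 / dphi y0.
Let m := / 2 * Rmin 1 (beta p).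

Lemma phi_pos y : 0 < y -> 0 < phi y.
Proof. intros Hy. apply phi_dphi_pos, Hy. Qed.

Lemma dphi_pos y : 0 < y -> 0 < dphi y.
Proof. intros Hy. apply phi_dphi_pos, Hy. Qed.

Lemma K_nonneg : 0 <= K.
Proof. left. apply Rdiv_lt_0_compat; [apply phi_pos | apply dphi_pos]; exact y0_pos. Qed.

Lemma dphi_nondecreasing a b : y0 <= a <= b -> dphi a <= dphi b.
Proof.
  intros Hab. enough (0 * (b - a) <= dphi b - dphi a) by lra.
  apply (is_derive_increment_ge dphi ddphi); [lra | intros c Hc; apply dphi_deriv; lra |].
  intros c Hc. left. apply ddphi_pos. lra.
Qed.

Lemma phi_le_affine_dphi y : y0 <= y -> phi y <= (K + y) * dphi y.
Proof.
  intros Hy.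
  assert (Hincr : phi y - phi y0 <= dphi y * (y - y0)).
  { apply (is_derive_increment_le phi dphi); [lra | intros c Hc; apply phi_deriv; lra |].
    intros c Hc. apply dphi_nondecreasing. lra. }
  assert (HK : phi y0 = K * dphi y0) by (unfold K; field; apply Rgt_not_eq, dphi_pos, y0_pos).
  assert (Hmono : dphi y0 <= dphi y) by (apply dphi_nondecreasing; lra).
  pose proof (dphi_pos y ltac:(lra)).
  assert (K * dphi y0 <= K * dphi y) by (apply Rmult_le_compat_l; [apply K_nonneg | exact Hmono]).
  nra.
Qed.

Lemma ode_rpower y : 0 < y -> ddphi y =
  / 2 * y * dphi y - gamma p * phi y - dphi y * Rpower (dphi y) (p - 1).
Proof. intros Hy. rewrite ode, absp_pos by (try apply dphi_pos; exact Hy). reflexivity. Qed.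

Lemma dphi_le_Rpower : exists C, 0 < C /\ forall y, y0 <= y -> dphi y <= C * Rpower y (beta p).
Proof.
  pose proof K_nonneg as HK.
  set (A := / 2 + Rabs (gamma p) + Rabs (gamma p) * K / y0).
  assert (HA : 0 < A).
  { assert (0 <= Rabs (gamma p) * K / y0).
    { apply Rdiv_le_0_compat; [apply Rmult_le_pos; [apply Rabs_pos | exact HK] | exact y0_pos]. }
    pose proof (Rabs_pos (gamma p)). unfold A. lra. }
  exists (Rpower A (beta p)). split; [apply Rpower_gt_0 |].
  intros y Hy.
  assert (Hpow : Rpower (dphi y) (p - 1) <= A * y).
  { pose proof (ddphi_pos y Hy) as Hdd. rewrite ode_rpower in Hdd by lra.
    pose proof (phi_le_affine_dphi y Hy) as Hphi.
    pose proof (dphi_pos y ltac:(lra)) as Hd.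
    assert (Hg : - gamma p * phi y <= Rabs (gamma p) * ((K + y) * dphi y)).
    { pose proof (Rle_abs (- gamma p)) as Habs. rewrite Rabs_Ropp in Habs.
      pose proof (phi_pos y ltac:(lra)). pose proof (Rabs_pos (gamma p)). nra. }
    assert (Hlt : Rpower (dphi y) (p - 1) < / 2 * y + Rabs (gamma p) * (K + y)).
    { apply (Rmult_lt_reg_l (dphi y)); [exact Hd | nra]. }
    assert (HKy : Rabs (gamma p) * K <= Rabs (gamma p) * K / y0 * y).
    { assert (0 <= Rabs (gamma p) * K) by (apply Rmult_le_pos; [apply Rabs_pos | exact HK]).
      replace (Rabs (gamma p) * K / y0 * y) with (Rabs (gamma p) * K * (y / y0)) by (field; lra).
      assert (1 <= y / y0) by (apply Rcomplements.Rle_div_r; lra). nra. }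
    unfold A. nra. }
  rewrite Rpower_mult_distr by lra.
  apply le_Rpower_beta; [exact p_gt_1 | apply dphi_pos; lra | exact Hpow].
Qed.

Lemma Zf_pos y : 0 < y -> 0 < Zf p dphi y.
Proof. intros Hy. apply Rmult_lt_0_compat; [apply Rinv_0_lt_compat, Hy | apply Rpower_gt_0]. Qed.

Lemma log_deriv_dphi_ge y : y0 <= y ->
  y * (m - Zf p dphi y) - Rabs (gamma p) * K <= ddphi y / dphi y.
Proof.
  intros Hy. pose proof (dphi_pos y ltac:(lra)) as Hd.
  assert (Hq : 0 <= phi y / dphi y <= K + y).
  { split; [left; apply Rdiv_lt_0_compat; [apply phi_pos; lra | exact Hd] |].
    apply Rcomplements.Rle_div_l; [exact Hd | apply phi_le_affine_dphi, Hy]. }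
  replace (ddphi y / dphi y) with (/ 2 * y - gamma p * (phi y / dphi y) - y * Zf p dphi y).
  - pose proof (half_sub_gamma_mul_ge p K y (phi y / dphi y) p_gt_1 K_nonneg Hq). unfold m. lra.
  - rewrite ode_rpower by lra. unfold Zf. field. lra.
Qed.

Lemma Zf_grows_below eps y : 0 < eps -> y0 <= y -> 1 <= y ->
  (p - 1) * (Rabs (gamma p) * K) + 2 <= (p - 1) * eps * y -> Zf p dphi y <= m - eps ->
  Zf p dphi y <= Zf p dphi y * ((p - 1) * (ddphi y / dphi y) - / y).
Proof.
  intros Heps Hy0 Hy1 Hlarge HZ.
  pose proof (log_deriv_dphi_ge y Hy0) as Hlog.
  pose proof (Zf_pos y ltac:(lra)) as HZpos.
  assert (Hinv : / y <= 1) by (rewrite <- Rinv_1; apply Rinv_le_contravar; lra).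
  assert (Hgap : y * eps <= y * (m - Zf p dphi y)) by (apply Rmult_le_compat_l; lra).
  assert (1 <= (p - 1) * (ddphi y / dphi y) - / y) by nra.
  nra.
Qed.

Lemma Zf_liminf eps : 0 < eps -> exists Y, forall y, Y <= y -> m - eps <= Zf p dphi y.
Proof.
  intros Heps. destruct (Rle_lt_dec m eps) as [Hme | Hme].
  { exists 1. intros y Hy. pose proof (Zf_pos y ltac:(lra)). lra. }
  set (D := (p - 1) * (Rabs (gamma p) * K) + 2).
  set (y1 := Rmax (Rmax y0 1) (D / ((p - 1) * eps))).
  assert (Hy1 : y0 <= y1 /\ 1 <= y1 /\ D / ((p - 1) * eps) <= y1).
  { pose proof (Rmax_l (Rmax y0 1) (D / ((p - 1) * eps))).
    pose proof (Rmax_r (Rmax y0 1) (D / ((p - 1) * eps))).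
    pose proof (Rmax_l y0 1). pose proof (Rmax_r y0 1). unfold y1. lra. }
  apply (eventually_above_barrier (Zf p dphi)
           (fun y => Zf p dphi y * ((p - 1) * (ddphi y / dphi y) - / y)) y1).
  - lra.
  - intros y Hy. apply is_derive_Zf; [lra | apply dphi_pos; lra | apply dphi_deriv; lra].
  - intros y Hy. apply Zf_pos. lra.
  - intros y Hy HZ. apply (Zf_grows_below eps); [exact Heps | lra | lra | | exact HZ].
    assert (0 < (p - 1) * eps) by (apply Rmult_lt_0_compat; lra).
    fold D. replace D with (D / ((p - 1) * eps) * ((p - 1) * eps)) by (field; lra).
    rewrite (Rmult_comm ((p - 1) * eps) y). apply Rmult_le_compat_r; lra.
Qed.

Lemma dphi_ge_Rpower : exists C1, 0 < C1 /\ forall y, 1 <= y -> C1 * Rpower y (beta p) <= dphi y.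
Proof.
  assert (Hm : 0 < m).
  { unfold m. apply Rmult_lt_0_compat; [lra | apply Rmin_glb_lt; [lra | apply beta_pos, p_gt_1]]. }
  destruct (Zf_liminf (m / 2)) as [Y HY]; [lra |].
  apply (Rpower_lower_bound_extend dphi 1 (beta p) (Rpower (m / 2) (beta p)) (Rmax Y 1)).
  - lra.
  - left. apply beta_pos, p_gt_1.
  - apply Rpower_gt_0.
  - intros y Hy. apply (is_derive_continuity_pt dphi y (ddphi y)), dphi_deriv. lra.
  - intros y Hy. apply dphi_pos. lra.
  - intros y Hy. pose proof (Rmax_l Y 1). pose proof (Rmax_r Y 1).
    rewrite Rpower_mult_distr by lra.
    apply Rpower_beta_le; [exact p_gt_1 | apply dphi_pos; lra | nra |].
    specialize (HY y ltac:(lra)). unfold Zf in HY.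
    replace (Rpower (dphi y) (p - 1)) with (y * (/ y * Rpower (dphi y) (p - 1))) by (field; lra).
    nra.
Qed.

End Tail.

Theorem lemma7p3 (p alpha Rb y0 : R) (phi dphi ddphi : R -> R) :
  1 < p -> 0 < alpha -> 0 < Rb -> 0 < y0 ->
  phi 0 = 0 -> dphi 0 = alpha ->
  filterlim phi (at_right 0) (locally 0) ->
  filterlim dphi (at_right 0) (locally alpha) ->
  (forall y, 0 < y -> is_derive phi y (dphi y)) ->
  (forall y, 0 < y -> is_derive dphi y (ddphi y)) ->
  (forall y, 0 < y ->
     ddphi y = / 2 * y * dphi y - gamma p * phi y - absp (dphi y) p) ->
  (forall y, 0 < y -> 0 < phi y /\ 0 < dphi y) ->
  (forall y, 0 <= y < Rb -> ddphi y < 0) ->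
  (forall y, Rb < y -> 0 < ddphi y) ->
  (forall y, y0 <= y -> 0 < phi y /\ 0 < dphi y /\ 0 < ddphi y) ->
  (exists C, 0 < C /\ forall y, y0 <= y -> dphi y <= C * Rpower y (beta p)) /\
  (forall eps, 0 < eps -> exists Y, forall y, Y <= y ->
     / 2 * Rmin 1 (beta p) - eps <= Zf p dphi y) /\
  (exists C1, 0 < C1 /\ forall y, 1 <= y -> C1 * Rpower y (beta p) <= dphi y).
Proof.
  intros Hp _ _ Hy0 _ _ _ _ Dphi Ddphi Hode Hpos _ _ Htail.
  assert (Hconvex : forall y, y0 <= y -> 0 < ddphi y) by (intros y Hy; apply Htail, Hy).
  split; [| split].
  - exact (dphi_le_Rpower p y0 phi dphi ddphi Hp Hy0 Dphi Ddphi Hode Hpos Hconvex).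
  - intros eps Heps.
    exact (Zf_liminf p y0 phi dphi ddphi Hp Hy0 Dphi Ddphi Hode Hpos Hconvex eps Heps).
  - exact (dphi_ge_Rpower p y0 phi dphi ddphi Hp Hy0 Dphi Ddphi Hode Hpos Hconvex).
Qed.
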